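(* Let $G$ be an infinite countable amenable group and $A\subseteq G$ a stable subset of positive upper Banach density. Then there are infinite sets $B\subseteq A\cdot A^{-1}$ and $C\subseteq A$ such that $B\cdot C\subseteq A$.
   Context: A sequence $(F_n)$ of finite subsets of a countable group $G$ is a (left) Følner sequence if $|F_n|\to\infty$ and $|F_n\cap gF_n|/|F_n|\to1$ for all $g\in G$; $G$ is amenable if it admits one. For a Følner sequence $\mathcal F$, $\bar d_{\mathcal F}(A)=\limsup_n|A\cap F_n|/|F_n|$, and the upper Banach density is $d^*(A)=\sup\{\bar d_{\mathcal F}(A):\mathcal F\text{ a left Følner sequence}\}$. A subset $A\subseteq G$ is stable if the relation $y\cdot x\in A$ is stable, i.e. there is $n$ such that there are no $a_1,\dots,a_n,b_1,\dots,b_n\in G$ with $b_j\cdot a_i\in A\iff i\le j$. *)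

From Stdlib Require Import Reals List Arith ClassicalEpsilon.
Import ListNotations.
Open Scope R_scope.

Record Group := {
  carrier :> Type;
  op : carrier -> carrier -> carrier;
  one : carrier;
  inv : carrier -> carrier;
  op_assoc : forall x y z, op x (op y z) = op (op x y) z;
  op_one_l : forall x, op one x = x;
  op_inv_l : forall x, op (inv x) x = one
}.

Section GroupDefs.
Variable G : Group.

Definition countable_group : Prop :=
  exists f : G -> nat, forall x y, f x = f y -> x = y.

Definition infinite_set (S : G -> Prop) : Prop :=
  exists f : nat -> G, (forall n m, f n = f m -> n = m) /\ (forall n, S (f n)).

Definition infinite_group : Prop := infinite_set (fun _ => True).

Definition cnt (P : G -> Prop) (l : list G) : nat :=
  length (filter (fun x => if excluded_middle_informative (P x) then true else false) l).

(* Finite subsets F_n are represented by duplicate-free lists. *)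
Definition Folner (F : nat -> list G) : Prop :=
  (forall n, NoDup (F n)) /\
  (forall M : nat, exists N, forall n, (N <= n)%nat -> (M <= length (F n))%nat) /\
  (forall g : G,
     Un_cv (fun n => INR (cnt (fun x => In x (map (op G g) (F n))) (F n))
                     / INR (length (F n))) 1).

Definition amenable : Prop := exists F, Folner F.

Definition is_limsup (u : nat -> R) (l : R) : Prop :=
  forall eps, 0 < eps ->
    (exists N, forall n, (N <= n)%nat -> u n < l + eps) /\
    (forall N, exists n, (N <= n)%nat /\ l - eps < u n).

Definition upper_density (F : nat -> list G) (A : G -> Prop) (d : R) : Prop :=
  is_limsup (fun n => INR (cnt A (F n)) / INR (length (F n))) d.

Definition upper_banach_density (A : G -> Prop) (d : R) : Prop :=
  is_lub (fun r => exists F, Folner F /\ upper_density F A r) d.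

Definition stable_set (A : G -> Prop) : Prop :=
  exists n : nat, ~ exists a b : nat -> G,
    forall i j, (i < n)%nat -> (j < n)%nat -> (A (op G (b j) (a i)) <-> (i <= j)%nat).

End GroupDefs.

(* A set S of positive upper density along a Følner sequence recurs: for every finite X
   some h outside X makes S ∩ h^-1 S of positive upper density, since otherwise many
   translates of S would be almost disjoint yet each occupy a fixed proportion of F_n.
   Iterating yields distinct b_j and c_i in A with b_j c_i in A whenever j < i.  Ramsey's
   theorem for the colouring p < q of [b_q c_p in A] gives an infinite subsequence that is
   monochromatic: if all such products lie in A, the odd-indexed b's and even-indexed c's
   work (b = (b c) c^-1 lies in A A^-1); if none do, interleaving with the pairs j < i
   produces half graphs of every length, contradicting stability. *)

From Stdlib Require Import Reals List Lia Lra Classical ClassicalEpsilon.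
Import ListNotations.
Open Scope nat_scope.

Definition eventually (P : nat -> Prop) := exists N, forall n, N <= n -> P n.
Definition infinitely_often (P : nat -> Prop) := forall N, exists n, N <= n /\ P n.

Lemma not_infinitely_often P : ~ infinitely_often P -> eventually (fun n => ~ P n).
Proof.
  intro H; apply NNPP; intro Hev; apply H; intro N.
  apply NNPP; intro HN; apply Hev; exists N.
  intros n Hn HP; apply HN; exists n; auto.
Qed.

Lemma eventually_and P Q : eventually P -> eventually Q -> eventually (fun n => P n /\ Q n).
Proof.
  intros [N1 H1] [N2 H2]; exists (max N1 N2); intros n Hn; split; [apply H1 | apply H2]; lia.
Qed.

Lemma eventually_forall_below K (Q : nat -> nat -> Prop) :
  (forall k, k < K -> eventually (Q k)) -> eventually (fun n => forall k, k < K -> Q k n).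
Proof.
  induction K as [|K IH]; intro H.
  - exists 0; intros; lia.
  - destruct (eventually_and _ _ (IH (fun k Hk => H k ltac:(lia))) (H K ltac:(lia)))
      as [N HN].
    exists N; intros n Hn k Hk.
    destruct (HN n Hn) as [Hlt HK].
    destruct (Nat.eq_dec k K); [subst; exact HK | apply Hlt; lia].
Qed.

Lemma infinitely_often_eventually P Q :
  infinitely_often P -> eventually Q -> infinitely_often (fun n => P n /\ Q n).
Proof.
  intros HP [M HM] N; destruct (HP (max N M)) as [n [Hn HPn]].
  exists n; split; [lia | split; [exact HPn | apply HM; lia]].
Qed.

Definition strictly_increasing (f : nat -> nat) := forall i j, i < j -> f i < f j.

Lemma strictly_increasing_succ f : (forall i, f i < f (S i)) -> strictly_increasing f.
Proof.
  intros H i j Hij; induction Hij as [|j Hij IH]; [apply H | specialize (H j); lia].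
Qed.

Lemma strictly_increasing_inj f : strictly_increasing f -> forall i j, f i = f j -> i = j.
Proof.
  intros Hf i j Hij.
  destruct (Nat.lt_trichotomy i j) as [H|[H|H]]; auto; apply Hf in H; lia.
Qed.

Lemma infinitely_often_subseq P :
  infinitely_often P -> exists e, strictly_increasing e /\ forall i, P (e i).
Proof.
  intro HP.
  set (next m := epsilon (inhabits 0) (fun n => m < n /\ P n)).
  assert (Hnext : forall m, m < next m /\ P (next m)).
  { intro m; apply epsilon_spec.
    destruct (HP (S m)) as [n [Hn HPn]]; exists n; split; [lia | exact HPn]. }
  set (e := fix e i := match i with 0 => next 0 | S k => next (e k) end).
  exists e; split.
  - apply strictly_increasing_succ; intro i; apply Hnext.
  - intros [|i]; apply Hnext.
Qed.

Section Ramsey.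
Variable R : nat -> nat -> Prop.

Definition red_toward (X : nat -> Prop) v := infinitely_often (fun n => X n /\ v < n /\ R v n).

(* The colour of the pairs [(v, n)] with [n] in the refined set depends only on [v]. *)
Definition ramsey_refine (X : nat -> Prop) v : nat -> Prop :=
  fun n => X n /\ v < n /\ (R v n <-> red_toward X v).

Lemma ramsey_refine_infinite X v :
  infinitely_often X -> infinitely_often (ramsey_refine X v).
Proof.
  intro HX; destruct (classic (red_toward X v)) as [Hred|Hred].
  - intro N; destruct (Hred N) as [n [Hn [HXn [Hv HR]]]].
    exists n; repeat split; tauto.
  - destruct (not_infinitely_often _ Hred) as [M HM]; intro N.
    destruct (HX (max N (max M (S v)))) as [n [Hn HXn]].
    exists n; repeat split; [lia | exact HXn | lia | | tauto].
    intro HR; exfalso; apply (HM n); [lia | repeat split; [exact HXn | lia | exact HR]].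
Qed.

Fixpoint ramsey_set (n : nat) : nat -> Prop :=
  match n with
  | 0 => fun _ => True
  | S m => ramsey_refine (ramsey_set m) (epsilon (inhabits 0) (ramsey_set m))
  end.

Definition ramsey_vertex n := epsilon (inhabits 0) (ramsey_set n).

Lemma ramsey_set_infinite n : infinitely_often (ramsey_set n).
Proof.
  induction n as [|n IH]; [intro N; exists N; split; auto; exact I |].
  apply ramsey_refine_infinite, IH.
Qed.

Lemma ramsey_vertex_in n : ramsey_set n (ramsey_vertex n).
Proof.
  unfold ramsey_vertex; apply epsilon_spec.
  destruct (ramsey_set_infinite n 0) as [v [_ Hv]]; exists v; exact Hv.
Qed.

Lemma ramsey_set_decr n m x : n <= m -> ramsey_set m x -> ramsey_set n x.
Proof. induction 1 as [|m _ IH]; [auto | intros [Hx _]; exact (IH Hx)]. Qed.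

Lemma ramsey_vertex_rel n m : n < m ->
  ramsey_vertex n < ramsey_vertex m /\
  (R (ramsey_vertex n) (ramsey_vertex m) <-> red_toward (ramsey_set n) (ramsey_vertex n)).
Proof.
  intro Hnm; destruct (ramsey_set_decr (S n) m _ Hnm (ramsey_vertex_in m)) as [_ H].
  exact H.
Qed.

Theorem ramsey_pairs : exists phi, strictly_increasing phi /\
  ((forall i j, i < j -> R (phi i) (phi j)) \/ (forall i j, i < j -> ~ R (phi i) (phi j))).
Proof.
  set (red n := red_toward (ramsey_set n) (ramsey_vertex n)).
  destruct (classic (infinitely_often red)) as [Hred|Hred].
  - destruct (infinitely_often_subseq _ Hred) as [e [He Hered]].
    exists (fun i => ramsey_vertex (e i)); split.
    + intros i j Hij; apply ramsey_vertex_rel, He, Hij.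
    + left; intros i j Hij; apply (ramsey_vertex_rel _ _ (He i j Hij)), Hered.
  - destruct (not_infinitely_often _ Hred) as [m Hm].
    exists (fun i => ramsey_vertex (m + i)); split.
    + intros i j Hij; apply ramsey_vertex_rel; lia.
    + right; intros i j Hij HR; apply (Hm (m + i)); [lia |].
      apply (ramsey_vertex_rel (m + i) (m + j) ltac:(lia)), HR.
Qed.

End Ramsey.

Section History.
Variable T : Type.
Variable next : list T -> T.

Fixpoint history (n : nat) : list T :=
  match n with 0 => [] | S m => history m ++ [next (history m)] end.

Definition history_seq n := next (history n).

Lemma history_map n : history n = map history_seq (seq 0 n).
Proof.
  induction n as [|n IH]; [reflexivity |].
  cbn [history]; rewrite seq_S, map_app, <- IH; reflexivity.
Qed.

Lemma in_history k l : k < l -> In (history_seq k) (history l).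
Proof. intro Hkl; rewrite history_map; apply in_map, in_seq; lia. Qed.

Lemma history_seq_inj {U} (g : T -> U) :
  (forall n, ~ In (g (history_seq n)) (map g (history n))) ->
  forall n m, g (history_seq n) = g (history_seq m) -> n = m.
Proof.
  intros Hnew.
  assert (K : forall k l, k < l -> g (history_seq k) <> g (history_seq l)).
  { intros k l Hkl He; apply (Hnew l); rewrite <- He; apply in_map, in_history, Hkl. }
  intros n m He; destruct (Nat.lt_trichotomy n m) as [H|[H|H]]; auto;
    exfalso; [apply (K n m) | apply (K m n)]; auto.
Qed.

End History.
Open Scope R_scope.

Section GroupLemmas.
Variable G : Group.
Local Notation "x ** y" := (op G x y) (at level 40, left associativity).

Lemma op_inv_r (x : G) : x ** inv G x = one G.
Proof.
  rewrite <- (op_one_l G (x ** inv G x)), <- (op_inv_l G (inv G x)) at 1.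
  rewrite <- op_assoc, (op_assoc G (inv G x) x (inv G x)), op_inv_l, op_one_l.
  apply op_inv_l.
Qed.

Lemma op_one_r (x : G) : x ** one G = x.
Proof. rewrite <- (op_inv_l G x), op_assoc, op_inv_r; apply op_one_l. Qed.

Lemma mulgKV (a b : G) : a ** inv G b ** b = a.
Proof. rewrite <- op_assoc, op_inv_l; apply op_one_r. Qed.

Lemma mulKVg (a b : G) : a ** (inv G a ** b) = b.
Proof. rewrite op_assoc, op_inv_r; apply op_one_l. Qed.

Lemma mulgK (a b : G) : a ** b ** inv G b = a.
Proof. rewrite <- op_assoc, op_inv_r; apply op_one_r. Qed.

Lemma avoid_list_of_infinite :
  infinite_group G -> forall L : list G, exists h, ~ In h L.
Proof.
  intros [f [Hf _]] L; apply NNPP; intro H.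
  assert (Hincl : incl (map f (seq 0 (S (length L)))) L).
  { intros x _; apply NNPP; intro Hx; apply H; exists x; exact Hx. }
  apply NoDup_incl_length in Hincl.
  - rewrite length_map, length_seq in Hincl; lia.
  - apply NoDup_map_NoDup_ForallPairs; [intros x y _ _; apply Hf | apply seq_NoDup].
Qed.

Lemma infinite_set_range (f : nat -> G) :
  (forall n m, f n = f m -> n = m) -> infinite_set G (fun x => exists k, x = f k).
Proof. intro Hf; exists f; split; [exact Hf | intro k; exists k; reflexivity]. Qed.

Lemma cnt_cons_in P x l : P x -> cnt G P (x :: l) = S (cnt G P l).
Proof.
  intro H; unfold cnt; simpl.
  destruct (excluded_middle_informative (P x)); [reflexivity | contradiction].
Qed.

Lemma cnt_cons_notin P x l : ~ P x -> cnt G P (x :: l) = cnt G P l.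
Proof.
  intro H; unfold cnt; simpl.
  destruct (excluded_middle_informative (P x)); [contradiction | reflexivity].
Qed.

Lemma cnt_le_length P l : (cnt G P l <= length l)%nat.
Proof. apply filter_length_le. Qed.

Lemma cnt_mono (P Q : G -> Prop) l :
  (forall x, In x l -> P x -> Q x) -> (cnt G P l <= cnt G Q l)%nat.
Proof.
  induction l as [|x l IH]; intro H; [reflexivity |].
  assert (IH' : (cnt G P l <= cnt G Q l)%nat) by (apply IH; intros; apply H; simpl; auto).
  destruct (classic (P x)) as [HP|HP].
  - rewrite cnt_cons_in, (cnt_cons_in Q) by (auto; apply H; simpl; auto); lia.
  - rewrite cnt_cons_notin by exact HP.
    destruct (classic (Q x)); [rewrite (cnt_cons_in Q) | rewrite (cnt_cons_notin Q)]; auto.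
Qed.

Lemma cnt_ext (P Q : G -> Prop) l : (forall x, P x <-> Q x) -> cnt G P l = cnt G Q l.
Proof. intro H; apply Nat.le_antisymm; apply cnt_mono; intros; apply H; auto. Qed.

Lemma cnt_false l : cnt G (fun _ => False) l = 0%nat.
Proof. induction l as [|x l IH]; [reflexivity |]; rewrite cnt_cons_notin; auto. Qed.

Lemma cnt_or_and (P Q : G -> Prop) l :
  (cnt G (fun x => P x \/ Q x) l + cnt G (fun x => P x /\ Q x) l
   = cnt G P l + cnt G Q l)%nat.
Proof.
  induction l as [|x l IH]; [reflexivity |].
  destruct (classic (P x)) as [HP|HP]; destruct (classic (Q x)) as [HQ|HQ];
    repeat first [ rewrite cnt_cons_in by tauto | rewrite cnt_cons_notin by tauto ]; lia.
Qed.

Lemma cnt_or_le (P Q : G -> Prop) l :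
  (cnt G (fun x => P x \/ Q x) l <= cnt G P l + cnt G Q l)%nat.
Proof. pose proof (cnt_or_and P Q l); lia. Qed.

Lemma cnt_and_ge (P Q : G -> Prop) l :
  (cnt G P l + cnt G Q l <= cnt G (fun x => P x /\ Q x) l + length l)%nat.
Proof. pose proof (cnt_or_and P Q l); pose proof (cnt_le_length (fun x => P x \/ Q x) l); lia. Qed.

Lemma In_filter_dec (P : G -> Prop) l x :
  In x (filter (fun x => if excluded_middle_informative (P x) then true else false) l)
  <-> In x l /\ P x.
Proof. rewrite filter_In; destruct (excluded_middle_informative (P x)); intuition congruence. Qed.

Lemma cnt_in_list l L : NoDup l -> (cnt G (fun x => In x L) l <= length L)%nat.
Proof.
  intro Hl; apply NoDup_incl_length; [apply NoDup_filter, Hl |].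
  intros x Hx; apply In_filter_dec in Hx; tauto.
Qed.

Lemma cnt_translate_inter (P : G -> Prop) g l : NoDup l ->
  (cnt G (fun y => P y /\ In y (map (op G g) l)) l <= cnt G (fun x => P (g ** x)) l)%nat.
Proof.
  intro Hl; unfold cnt.
  rewrite <- (length_map (op G g)
    (filter (fun x => if excluded_middle_informative (P (g ** x)) then true else false) l)).
  apply NoDup_incl_length; [apply NoDup_filter, Hl |].
  intros y Hy; apply In_filter_dec in Hy; destruct Hy as [_ [HP Hm]].
  apply in_map_iff in Hm; destruct Hm as [x [<- Hx]].
  apply in_map, In_filter_dec; split; auto.
Qed.

Fixpoint nsum (f : nat -> nat) (n : nat) : nat :=
  match n with O => O | S m => (nsum f m + f m)%nat end.

Lemma nsum_lb f n a : (forall k, (k < n)%nat -> a <= INR (f k)) -> INR n * a <= INR (nsum f n).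
Proof.
  induction n as [|n IH]; intro H; cbn [nsum]; [simpl; lra |].
  rewrite plus_INR, S_INR.
  pose proof (IH (fun k Hk => H k ltac:(lia))); pose proof (H n ltac:(lia)); lra.
Qed.

Lemma nsum_ub f n b : (forall k, (k < n)%nat -> INR (f k) <= b) -> INR (nsum f n) <= INR n * b.
Proof.
  induction n as [|n IH]; intro H; cbn [nsum]; [simpl; lra |].
  rewrite plus_INR, S_INR.
  pose proof (IH (fun k Hk => H k ltac:(lia))); pose proof (H n ltac:(lia)); lra.
Qed.

Lemma cnt_union_le (E : nat -> G -> Prop) (Q : G -> Prop) l N :
  (cnt G (fun x => (exists k, (k < N)%nat /\ E k x) /\ Q x) l
   <= nsum (fun k => cnt G (fun x => E k x /\ Q x) l) N)%nat.
Proof.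
  induction N as [|N IH]; cbn [nsum].
  - enough (Hle : (cnt G (fun x => (exists k, (k < 0)%nat /\ E k x) /\ Q x) l
                    <= cnt G (fun _ => False) l)%nat) by (rewrite cnt_false in Hle; exact Hle).
    apply cnt_mono; intros x _ [[k [Hk _]] _]; lia.
  - rewrite (cnt_ext _ (fun x => ((exists k, (k < N)%nat /\ E k x) /\ Q x) \/ (E N x /\ Q x))).
    + pose proof (cnt_or_le (fun x => (exists k, (k < N)%nat /\ E k x) /\ Q x)
                            (fun x => E N x /\ Q x) l); lia.
    + intro x; split.
      * intros [[k [Hk HE]] HQ]; destruct (Nat.eq_dec k N); [subst; right; auto |].
        left; split; [exists k; split; [lia | exact HE] | exact HQ].
      * intros [[[k [Hk HE]] HQ] | [HE HQ]]; split; auto;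
          [exists k | exists N]; split; auto; lia.
Qed.

Lemma cnt_sum_le_union_pairs (E : nat -> G -> Prop) l N :
  (nsum (fun k => cnt G (E k) l) N
   <= cnt G (fun x => exists k, (k < N)%nat /\ E k x) l
      + nsum (fun m => nsum (fun k => cnt G (fun x => E k x /\ E m x) l) m) N)%nat.
Proof.
  induction N as [|N IH]; cbn [nsum]; [lia |].
  pose proof (cnt_or_and (fun x => exists k, (k < N)%nat /\ E k x) (E N) l).
  pose proof (cnt_union_le E (E N) l N).
  rewrite (cnt_ext (fun x => exists k, (k < S N)%nat /\ E k x)
                   (fun x => (exists k, (k < N)%nat /\ E k x) \/ E N x)); [lia |].
  intro x; split.
  - intros [k [Hk HE]]; destruct (Nat.eq_dec k N); [subst; right; auto |].
    left; exists k; split; [lia | exact HE].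
  - intros [[k [Hk HE]] | HE]; [exists k | exists N]; split; auto; lia.
Qed.

Lemma bonferroni_bound (E : nat -> G -> Prop) l N a b : 0 <= b ->
  (forall k, (k < N)%nat -> a <= INR (cnt G (E k) l)) ->
  (forall k m, (k < m < N)%nat -> INR (cnt G (fun x => E k x /\ E m x) l) <= b) ->
  INR N * a <= INR (length l) + INR N * INR N * b.
Proof.
  intros Hb Hsingle Hpair.
  pose proof (nsum_lb _ N a Hsingle) as H1.
  pose proof (cnt_sum_le_union_pairs E l N) as H2; apply le_INR in H2; rewrite plus_INR in H2.
  pose proof (cnt_le_length (fun x => exists k, (k < N)%nat /\ E k x) l) as H3.
  apply le_INR in H3.
  assert (H4 : INR (nsum (fun m => nsum (fun k => cnt G (fun x => E k x /\ E m x) l) m) N)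
               <= INR N * (INR N * b)).
  { apply nsum_ub; intros m Hm; apply Rle_trans with (INR m * b).
    - apply nsum_ub; intros k Hk; apply Hpair; lia.
    - apply Rmult_le_compat_r; [exact Hb | apply le_INR; lia]. }
  lra.
Qed.

End GroupLemmas.

Section Density.
Variable G : Group.
Local Notation "x ** y" := (op G x y) (at level 40, left associativity).
Variable F : nat -> list G.
Hypothesis HF : Folner G F.

Local Notation size n := (INR (length (F n))).

Definition pos_upper_density (S : G -> Prop) := exists d, 0 < d /\
  infinitely_often (fun n => d * size n <= INR (cnt G S (F n))).

Definition return_set (S : G -> Prop) (h : G) : G -> Prop := fun y => S y /\ S (h ** y).

Lemma Folner_size_ge1 : eventually (fun n => 1 <= size n).
Proof.
  destruct HF as [_ [HL _]]; destruct (HL 1%nat) as [N HN].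
  exists N; intros n Hn; apply (le_INR 1), HN, Hn.
Qed.

Lemma Folner_translate_defect g eps : 0 < eps -> eventually (fun n =>
  size n - INR (cnt G (fun x => In x (map (op G g) (F n))) (F n)) <= eps * size n).
Proof.
  intro He; destruct HF as [_ [_ Hinv]]; destruct (Hinv g eps He) as [N2 H2].
  destruct (eventually_and _ _ Folner_size_ge1 (ex_intro _ N2 H2)) as [N HN].
  exists N; intros n Hn; destruct (HN n Hn) as [HL Hc].
  unfold R_dist in Hc; apply Rabs_def2 in Hc; destruct Hc as [_ Hc].
  set (c := INR (cnt _ _ _)) in *; set (L := size n) in *.
  assert (Hc' : c = (c / L) * L) by (field; lra).
  set (q := c / L) in *; rewrite Hc'; nra.
Qed.

Lemma cnt_translate_lb (P : G -> Prop) g eps : 0 < eps -> eventually (fun n =>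
  INR (cnt G P (F n)) - eps * size n <= INR (cnt G (fun x => P (g ** x)) (F n))).
Proof.
  intro He; destruct (Folner_translate_defect g eps He) as [N H].
  exists N; intros n Hn; specialize (H n Hn).
  destruct HF as [HN _].
  pose proof (cnt_and_ge G P (fun x => In x (map (op G g) (F n))) (F n)) as H1.
  pose proof (cnt_translate_inter G P g (F n) (HN n)) as H2.
  apply le_INR in H1; apply le_INR in H2; rewrite !plus_INR in H1; lra.
Qed.

Lemma cnt_translate_ub (P : G -> Prop) g eps : 0 < eps -> eventually (fun n =>
  INR (cnt G (fun x => P (g ** x)) (F n)) <= INR (cnt G P (F n)) + eps * size n).
Proof.
  intro He; destruct (cnt_translate_lb (fun x => P (g ** x)) (inv G g) eps He) as [N H].
  exists N; intros n Hn; specialize (H n Hn).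
  rewrite (cnt_ext G (fun x => P (g ** (inv G g ** x))) P) in H
    by (intro x; rewrite mulKVg; tauto).
  lra.
Qed.

Lemma not_pos_upper_density S eps : ~ pos_upper_density S -> 0 < eps ->
  eventually (fun n => INR (cnt G S (F n)) < eps * size n).
Proof.
  intros HS He; destruct (classic (infinitely_often
    (fun n => eps * size n <= INR (cnt G S (F n))))) as [H|H].
  - exfalso; apply HS; exists eps; auto.
  - destruct (not_infinitely_often _ H) as [N HN]; exists N; intros n Hn.
    apply Rnot_le_lt, HN, Hn.
Qed.

Lemma pos_upper_density_avoid S L : pos_upper_density S -> exists x, S x /\ ~ In x L.
Proof.
  intros [d [Hd HS]]; apply NNPP; intro H.
  assert (HSL : forall x, S x -> In x L)
    by (intros x Hx; apply NNPP; intro; apply H; exists x; auto).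
  destruct (INR_unbounded (INR (length L) / d)) as [M HM].
  destruct HF as [HN [HL _]]; destruct (HL M) as [N HN'].
  destruct (HS N) as [n [Hn Hc]].
  assert (H1 : (cnt G S (F n) <= length L)%nat).
  { apply (Nat.le_trans _ (cnt G (fun x => In x L) (F n)));
      [apply cnt_mono; auto | apply cnt_in_list, HN]. }
  apply le_INR in H1.
  assert (H2 : INR M <= size n) by (apply le_INR, HN', Hn).
  assert (H3 : INR (length L) < d * INR M).
  { apply (Rmult_lt_compat_l d) in HM; [| exact Hd].
    replace (d * (INR (length L) / d)) with (INR (length L)) in HM by (field; lra); exact HM. }
  nra.
Qed.

End Density.

Lemma pos_upper_density_of_banach (G : Group) (A : G -> Prop) d :
  upper_banach_density G A d -> 0 < d -> exists F, Folner G F /\ pos_upper_density G F A.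
Proof.
  intros [_ Hlub] Hd.
  assert (HF : exists F r, Folner G F /\ upper_density G F A r /\ 0 < r).
  { apply NNPP; intro H.
    enough (Hle : d <= 0) by lra.
    apply Hlub; intros r [F [HF Hr]]; apply Rnot_lt_le; intro Hr0; apply H; exists F, r; auto. }
  destruct HF as [F [r [HF [Hr Hr0]]]].
  exists F; split; [exact HF |]; exists (r / 2); split; [lra |].
  intro N; destruct (Folner_size_ge1 G F HF) as [N1 H1].
  destruct (proj2 (Hr (r / 2) ltac:(lra)) (max N N1)) as [m [Hm Hm']].
  exists m; split; [lia |]; specialize (H1 m ltac:(lia)).
  set (c := INR (cnt G A (F m))) in *; set (L := INR (length (F m))) in *.
  assert (Hc : c = (c / L) * L) by (field; lra).
  set (q := c / L) in *; rewrite Hc; nra.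
Qed.

Section Recurrence.
Variable G : Group.
Local Notation "x ** y" := (op G x y) (at level 40, left associativity).
Variable F : nat -> list G.
Hypothesis HF : Folner G F.
Hypothesis Havoid : forall L : list G, exists h, ~ In h L.

Local Notation size n := (INR (length (F n))).

Lemma seq_avoiding_quotients (X : list G) :
  exists hs : nat -> G, forall k l, (k < l)%nat -> ~ In (hs l ** inv G (hs k)) X.
Proof.
  set (next L := epsilon (inhabits (one G))
                   (fun h => ~ In h (flat_map (fun y => map (fun x => x ** y) X) L))).
  assert (Hnext : forall L, ~ In (next L) (flat_map (fun y => map (fun x => x ** y) X) L))
    by (intro L; apply epsilon_spec, Havoid).
  exists (history_seq G next); intros k l Hkl Hin.
  apply (Hnext (history G next l)); fold (history_seq G next l).
  rewrite <- (mulgKV G (history_seq G next l) (history_seq G next k)).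
  apply in_flat_map; exists (history_seq G next k); split.
  - apply in_history, Hkl.
  - apply (in_map (fun x => x ** history_seq G next k)), Hin.
Qed.

(* [x] lies in both [g^-1 S] and [h^-1 S] exactly when [g x] lies in [S ∩ (h g^-1)^-1 S]. *)
Lemma cnt_pair_translates_small S g h eps :
  ~ pos_upper_density G F (return_set G S (h ** inv G g)) -> 0 < eps ->
  eventually (fun n => INR (cnt G (fun x => S (g ** x) /\ S (h ** x)) (F n)) <= 2 * eps * size n).
Proof.
  intros HT He.
  destruct (eventually_and _ _ (not_pos_upper_density G F _ eps HT He)
              (cnt_translate_ub G F HF (return_set G S (h ** inv G g)) g eps He)) as [N HN].
  exists N; intros n Hn; destruct (HN n Hn) as [H1 H2].
  assert (Hm : (cnt G (fun x => S (g ** x) /\ S (h ** x)) (F n)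
                <= cnt G (fun x => return_set G S (h ** inv G g) (g ** x)) (F n))%nat).
  { apply cnt_mono; intros x _ [Hg Hh]; split; [exact Hg |].
    rewrite (op_assoc G (h ** inv G g) g x), mulgKV; exact Hh. }
  apply le_INR in Hm; lra.
Qed.

(* Pigeonhole: with [N d > 4] the [N] translates [hs_k^-1 S] would have total
   count about [N d |F_n|], but pairwise almost disjoint they fit into [F_n]. *)
Lemma pos_upper_density_return S X : pos_upper_density G F S ->
  exists h, ~ In h X /\ pos_upper_density G F (return_set G S h).
Proof.
  intros [d [Hd HS]].
  destruct (INR_unbounded (4 / d)) as [N HN].
  assert (HNd : 4 < INR N * d).
  { apply (Rmult_lt_compat_r d) in HN; [| exact Hd].
    replace (4 / d * d) with 4 in HN by (field; lra); exact HN. }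
  assert (HN1 : 1 <= INR N).
  { destruct N; [simpl in HNd; lra | apply (le_INR 1); lia]. }
  destruct (seq_avoiding_quotients X) as [hs Hhs].
  apply NNPP; intro Hno.
  set (eps := / (8 * INR N * INR N)).
  assert (Heps : 0 < eps) by (unfold eps; apply Rinv_0_lt_compat; nra).
  set (E k x := S (hs k ** x)).
  assert (Hpairs : eventually (fun n => forall m, (m < N)%nat -> forall k, (k < m)%nat ->
            INR (cnt G (fun x => E k x /\ E m x) (F n)) <= 2 * eps * size n)).
  { apply eventually_forall_below; intros m _; apply eventually_forall_below; intros k Hk.
    apply cnt_pair_translates_small; [| exact Heps].
    intro HT; apply Hno; exists (hs m ** inv G (hs k)); split; [apply Hhs, Hk | exact HT]. }
  assert (Hsingle : eventually (fun n => forall k, (k < N)%nat ->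
            INR (cnt G S (F n)) - eps * size n <= INR (cnt G (E k) (F n)))).
  { apply eventually_forall_below; intros k _; apply cnt_translate_lb; auto. }
  destruct (infinitely_often_eventually _ _ HS
    (eventually_and _ _ (Folner_size_ge1 G F HF) (eventually_and _ _ Hpairs Hsingle)) 0%nat)
    as [n [_ [Hdn [HL [Hpn Hsn]]]]].
  pose proof (bonferroni_bound G E (F n) N (d * size n - eps * size n) (2 * eps * size n))
    as Hb.
  assert (e1 : INR N * INR N * (2 * eps * size n) = size n / 4)
    by (unfold eps; field; lra).
  assert (e2 : INR N * (d * size n - eps * size n) = INR N * d * size n - size n / (8 * INR N))
    by (unfold eps; field; lra).
  assert (e3 : size n / (8 * INR N) <= size n / 8).
  { unfold Rdiv; apply Rmult_le_compat_l; [lra | apply Rinv_le_contravar; nra]. }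
  assert (e4 : 4 * size n < INR N * d * size n) by (apply Rmult_lt_compat_r; lra).
  rewrite e1, e2 in Hb.
  enough (INR N * d * size n - size n / (8 * INR N) <= size n + size n / 4) by lra.
  apply Hb; [nra | intros k Hk; specialize (Hsn k Hk); lra | intros k m Hkm; apply Hpn; lia].
Qed.

Variable A : G -> Prop.
Hypothesis HA : pos_upper_density G F A.

(* Along a history [(b_0, c_0), ...]: [S_0 = A] and [S_(k+1) = S_k ∩ b_k^-1 S_k];
   the [c]'s do not affect it. *)
Definition survivors (hist : list (G * G)) : G -> Prop :=
  fold_left (fun S bc => return_set G S (fst bc)) hist A.

Definition next_pair (hist : list (G * G)) : G * G :=
  (epsilon (inhabits (one G)) (fun h => ~ In h (map fst hist) /\
                                        pos_upper_density G F (return_set G (survivors hist) h)),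
   epsilon (inhabits (one G)) (fun c => survivors hist c /\ ~ In c (map snd hist))).

Local Notation surv n := (survivors (history _ next_pair n)).
Local Notation pair n := (history_seq _ next_pair n).

Lemma survivors_succ n : surv (S n) = return_set G (surv n) (fst (pair n)).
Proof. unfold survivors; cbn [history]; rewrite fold_left_app; reflexivity. Qed.

Lemma survivors_decr n m y : (n <= m)%nat -> surv m y -> surv n y.
Proof. induction 1 as [|m _ IH]; [auto | rewrite survivors_succ; intros [Hy _]; auto]. Qed.

Lemma survivors_in_A n y : surv n y -> A y.
Proof. intro Hy; exact (survivors_decr 0 n y (Nat.le_0_l n) Hy). Qed.

Lemma next_pair_spec n : pos_upper_density G F (surv n) ->
  (~ In (fst (pair n)) (map fst (history _ next_pair n)) /\
   pos_upper_density G F (surv (S n))) /\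
  (surv n (snd (pair n)) /\ ~ In (snd (pair n)) (map snd (history _ next_pair n))).
Proof.
  rewrite survivors_succ; unfold history_seq.
  generalize (history _ next_pair n) as hist; intros hist Hpud.
  unfold next_pair; cbn [fst snd]; split; apply epsilon_spec.
  - apply pos_upper_density_return, Hpud.
  - apply (pos_upper_density_avoid G F HF), Hpud.
Qed.

Lemma survivors_pos_upper_density n : pos_upper_density G F (surv n).
Proof. induction n as [|n IH]; [exact HA | apply (next_pair_spec n IH)]. Qed.

Lemma recurrent_sequences : exists b c : nat -> G,
  (forall n m, b n = b m -> n = m) /\ (forall n m, c n = c m -> n = m) /\
  (forall i, A (c i)) /\ (forall i j, (j < i)%nat -> A (b j ** c i)).
Proof.
  pose proof (fun n => next_pair_spec n (survivors_pos_upper_density n)) as Hspec.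
  exists (fun n => fst (pair n)), (fun n => snd (pair n)); repeat split.
  - apply history_seq_inj; intro n; apply Hspec.
  - apply history_seq_inj; intro n; apply Hspec.
  - intro i; apply (survivors_in_A i), Hspec.
  - intros i j Hji.
    assert (Hc : surv (S j) (snd (pair i))) by (apply (survivors_decr _ i); [lia | apply Hspec]).
    rewrite survivors_succ in Hc; apply (survivors_in_A j), Hc.
Qed.

End Recurrence.

Lemma stable_monochromatic_subseq (G : Group) (A : G -> Prop) (b c : nat -> G) :
  stable_set G A -> (forall i j, (j < i)%nat -> A (op G (b j) (c i))) ->
  exists phi, strictly_increasing phi /\
    forall p q, (p < q)%nat -> A (op G (b (phi q)) (c (phi p))).
Proof.
  intros [n Hstab] Hbc.
  destruct (ramsey_pairs (fun p q => A (op G (b q) (c p)))) as [phi [Hphi [Hall|Hnone]]].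
  - exists phi; split; assumption.
  - exfalso; apply Hstab.
    exists (fun i => c (phi (2 * (n - i) + 1)%nat)), (fun j => b (phi (2 * (n - j))%nat)).
    intros i j Hi Hj; split.
    + intro HA; apply NNPP; intro Hij.
      apply (Hnone (2 * (n - i) + 1)%nat (2 * (n - j))%nat); [lia | exact HA].
    + intro Hij; apply Hbc, Hphi; lia.
Qed.

Theorem mainTheorem6 (G : Group) (A : G -> Prop) :
  infinite_group G -> countable_group G -> amenable G ->
  stable_set G A ->
  (exists d, upper_banach_density G A d /\ 0 < d) ->
  exists B C : G -> Prop,
    infinite_set G B /\ infinite_set G C /\
    (forall b, B b -> exists a1 a2, A a1 /\ A a2 /\ b = op G a1 (inv G a2)) /\
    (forall c, C c -> A c) /\
    (forall b c, B b -> C c -> A (op G b c)).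
Proof.
  intros Hinf _ _ Hstab [d [Hd Hd0]].
  destruct (pos_upper_density_of_banach G A d Hd Hd0) as [F [HF HA]].
  destruct (recurrent_sequences G F HF (avoid_list_of_infinite G Hinf) A HA)
    as [b [c [Hb [Hc [HcA Hbc]]]]].
  destruct (stable_monochromatic_subseq G A b c Hstab Hbc) as [phi [Hphi Hmono]].
  set (b' k := b (phi (2 * k + 1)%nat)); set (c' k := c (phi (2 * k)%nat)).
  assert (Hb'c' : forall k m, A (op G (b' k) (c' m))).
  { intros k m; destruct (Nat.lt_ge_cases (2 * m) (2 * k + 1)) as [H|H].
    - apply Hmono, H.
    - apply Hbc, Hphi; lia. }
  exists (fun x => exists k, x = b' k), (fun x => exists k, x = c' k); repeat split.
  - apply infinite_set_range; intros i j Hij.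
    apply Hb, (strictly_increasing_inj _ Hphi) in Hij; lia.
  - apply infinite_set_range; intros i j Hij.
    apply Hc, (strictly_increasing_inj _ Hphi) in Hij; lia.
  - intros x [k ->]; exists (op G (b' k) (c' 0%nat)), (c' 0%nat).
    repeat split; [apply Hb'c' | apply HcA | symmetry; apply mulgK].
  - intros x [k ->]; apply HcA.
  - intros x y [k ->] [m ->]; apply Hb'c'.
Qed.
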